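(* Let $m,n$ be positive integers. Every extreme point of the convex set $\Gamma^\pi_{m,n}$ of $m\times n$ centrosymmetric stochastic matrices can be written in the form $\frac{1}{2}(R+R^\pi)$ for some $m\times n$ rectangular permutation matrix $R$.
   Context: A real $m\times n$ matrix $A=(a_{i,j})$ is stochastic if all entries are nonnegative and every row sums to $1$. For $A\in M_{m,n}$, $A^\pi$ denotes the $m\times n$ matrix with $(A^\pi)_{i,j}=a_{m+1-i,n+1-j}$ (rotation by $180^\circ$); $A$ is centrosymmetric if $A=A^\pi$. $\Gamma^\pi_{m,n}$ is the set of $m\times n$ centrosymmetric stochastic matrices. A rectangular permutation matrix is an $m\times n$ $(0,1)$-matrix with exactly one $1$ in each row. *)

From HB Require Import structures.
From mathcomp Require Import all_boot all_order all_algebra.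
From mathcomp Require Import reals.
Set Implicit Arguments. Unset Strict Implicit. Unset Printing Implicit Defensive.
Import Order.TTheory GRing.Theory Num.Theory.
Local Open Scope ring_scope.

Definition stochastic (R : realType) (m n : nat) (A : 'M[R]_(m, n)) : Prop :=
  (forall i j, 0 <= A i j) /\ (forall i, \sum_(j < n) A i j = 1).

(* A^pi : rotation by 180 degrees, (A^pi)_{i,j} = a_{m+1-i, n+1-j}
   (0-based: A (rev_ord i) (rev_ord j)). *)
Definition mxpi (R : Type) (m n : nat) (A : 'M[R]_(m, n)) : 'M[R]_(m, n) :=
  \matrix_(i < m, j < n) A (rev_ord i) (rev_ord j).

Definition centrosymmetric (R : Type) (m n : nat) (A : 'M[R]_(m, n)) : Prop :=
  A = mxpi A.

Definition Gamma_pi (R : realType) (m n : nat) (A : 'M[R]_(m, n)) : Prop :=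
  centrosymmetric A /\ stochastic A.

Definition extreme_point (R : realType) (m n : nat)
  (S : 'M[R]_(m, n) -> Prop) (A : 'M[R]_(m, n)) : Prop :=
  S A /\
  forall (B C : 'M[R]_(m, n)) (t : R), S B -> S C -> 0 < t -> t < 1 ->
    A = t *: B + (1 - t) *: C -> B = C.

Definition rect_perm_mx (R : realType) (m n : nat) (P : 'M[R]_(m, n)) : Prop :=
  (forall i j, P i j = 0 \/ P i j = 1) /\
  (forall i, exists! j, P i j = 1).

From HB Require Import structures.
From mathcomp Require Import all_boot all_order all_algebra.
From mathcomp Require Import reals.
From mathcomp Require Import lra.
Import Order.TTheory GRing.Theory Num.Theory.
Set Implicit Arguments.
Unset Strict Implicit.
Unset Printing Implicit Defensive.

Local Open Scope ring_scope.

(* If a row i of an extreme point A has two positive entries j1 <> j2, shift a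
   little mass from (i, j2) to (i, j1) and perform the rotated shift as well:
   this perturbs A in both directions inside Gamma^pi, unless the two shifts
   cancel, which happens only when row i is its own mirror image and j2 is
   the mirror of j1.  Hence a non-central row of A is a unit vector e_j and the
   self-mirrored row is (e_j + e_(n+1-j))/2.  Picking one unit vector per pair of
   mirrored rows gives a rectangular permutation matrix P with
   A = (P + P^pi)/2. *)

HB.instance Definition _ (R : pzRingType) m n :=
  GRing.Linear.copy (@mxpi R m n) (mxsub (@rev_ord m) (@rev_ord n)).

Section UnitSumVectors.
Variables (R : numFieldType) (n : nat).
Implicit Types v : 'I_n -> R.

Lemma sum_rev_ord (F : 'I_n -> R) : \sum_j F (rev_ord j) = \sum_j F j.
Proof. by rewrite [RHS](reindex_inj rev_ord_inj). Qed.

Lemma sumr_eq1_exists_gt0 v :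
  (forall k, 0 <= v k) -> \sum_k v k = 1 -> exists j, 0 < v j.
Proof.
move=> v_ge0 v_sum; have [j vj_gt0 | v_le0] := pickP (fun j => 0 < v j).
  by exists j.
move: v_sum; rewrite big1 => [/esym/eqP|k _]; first by rewrite oner_eq0.
by apply/eqP/(contraFT _ (v_le0 k)) => vk_neq0; rewrite lt0r vk_neq0 v_ge0.
Qed.

Lemma sumr_eq1_supp1 v j :
  \sum_k v k = 1 -> (forall k, k != j -> v k = 0) -> forall k, v k = (k == j)%:R.
Proof.
move=> v_sum v_supp k; have [->|/v_supp //] := eqVneq k j.
by rewrite -v_sum (bigD1 j) //= big1 ?addr0.
Qed.

Lemma sumr_eq1_supp_rev v j :
  (forall k, v (rev_ord k) = v k) -> \sum_k v k = 1 ->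
  (forall k, k != j -> k != rev_ord j -> v k = 0) ->
  forall k, v k = ((k == j)%:R + (k == rev_ord j)%:R) / 2.
Proof.
move=> v_sym v_sum v_supp k.
have [j_fix | j_nfix] := eqVneq j (rev_ord j).
  have v_supp1 k' : k' != j -> v k' = 0 by move=> kj; apply: v_supp; rewrite -?j_fix.
  by rewrite -j_fix (sumr_eq1_supp1 v_sum v_supp1) mulrDl -splitr.
have vj_half : v j = 1 / 2.
  move: v_sum; rewrite (bigD1 j) // (bigD1 (rev_ord j)) 1?eq_sym //= v_sym.
  rewrite big1 => [|k' /andP[]]; last exact: v_supp.
  rewrite addr0 -mulr2n => /(congr1 (fun x => x / 2)).
  by rewrite -[v j *+ 2]mulr_natr mulfK ?pnatr_eq0.
have [->|kj] := eqVneq k j; first by rewrite vj_half (negbTE j_nfix) addr0.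
have [->|kjr] := eqVneq k (rev_ord j); first by rewrite v_sym vj_half add0r.
by rewrite v_supp // add0r mul0r.
Qed.

End UnitSumVectors.

Section CentrosymmetricStochastic.
Variables (R : realType) (m n : nat).
Implicit Types (S : 'M[R]_(m, n) -> Prop) (A D E : 'M[R]_(m, n)).

Lemma extreme_point_perturb S A D :
  extreme_point S A -> S (A + D) -> S (A - D) -> D = 0.
Proof.
move=> [_ A_ext] SAD SAD'.
have half_gt0 : (0 : R) < 2^-1 by rewrite invr_gt0.
have half_lt1 : (2^-1 : R) < 1 by rewrite invf_lt1 // ltr1n.
have A_mid : A = 2^-1 *: (A + D) + (1 - 2^-1) *: (A - D).
  rewrite {2}(splitr 1) mul1r addrK -scalerDr addrACA subrr addr0.
  by rewrite -mulr2n -scaler_nat scalerA mulVf ?pnatr_eq0 ?scale1r.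
move: (A_ext _ _ _ SAD SAD' half_gt0 half_lt1 A_mid) => /addrI/eqP.
by rewrite -subr_eq0 opprK -mulr2n -scaler_nat scaler_eq0 pnatr_eq0 => /eqP.
Qed.

Lemma mxpiK : involutive (@mxpi R m n).
Proof. by move=> A; apply/matrixP => i j; rewrite !mxE !rev_ordK. Qed.

Lemma centrosymmetricE A :
  centrosymmetric A -> forall i j, A (rev_ord i) (rev_ord j) = A i j.
Proof. by move=> A_sym i j; rewrite [in RHS]A_sym mxE. Qed.

Lemma Gamma_pi_add A D :
  Gamma_pi A -> centrosymmetric D -> (forall i, \sum_j D i j = 0) ->
  (forall i j, `|D i j| <= A i j) -> Gamma_pi (A + D).
Proof.
move=> [A_sym [_ A_sum]] D_sym D_sum D_le; split; [|split].
- by rewrite /centrosymmetric linearD /= -A_sym -D_sym.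
- by move=> i j; rewrite mxE -lerBlDr sub0r (le_trans _ (D_le i j)) // -normrN ler_norm.
- by move=> i; under eq_bigr do rewrite mxE; rewrite big_split /= A_sum D_sum addr0.
Qed.

Lemma extreme_Gamma_pi_perturb A D :
  extreme_point (@Gamma_pi R m n) A -> centrosymmetric D ->
  (forall i, \sum_j D i j = 0) -> (forall i j, `|D i j| <= A i j) -> D = 0.
Proof.
move=> A_ext D_sym D_sum D_le; have A_Gamma := A_ext.1.
apply: (extreme_point_perturb A_ext); first exact: Gamma_pi_add.
apply: Gamma_pi_add A_Gamma _ _ _ => [|i|i j]; last by rewrite mxE normrN.
  by rewrite /centrosymmetric linearN /= -D_sym.
by under eq_bigr do rewrite mxE; rewrite sumrN D_sum oppr0.
Qed.

Lemma extreme_Gamma_pi_symmetrized_eq0 A E (c : R) :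
  extreme_point (@Gamma_pi R m n) A -> 0 < c ->
  (forall i, \sum_j E i j = 0) -> (forall i j, `|E i j| <= 1) ->
  (forall i j, E i j != 0 -> c <= A i j) ->
  E + mxpi E = 0.
Proof.
move=> A_ext c_gt0 E_sum E_le1 E_supp.
have [[A_sym [A_ge0 _]] _] := A_ext.
have half_c_ge0 : 0 <= c / 2 by rewrite divr_ge0 ?ltW.
have E_le i j : c / 2 * `|E i j| <= A i j / 2.
  have [-> | /E_supp c_le] := eqVneq (E i j) 0; first by rewrite normr0 mulr0 divr_ge0.
  by rewrite (le_trans (ler_wpM2l half_c_ge0 (E_le1 i j))) // mulr1 ler_pM2r ?invr_gt0.
suff /eqP : (c / 2) *: (E + mxpi E) = 0.
  by rewrite scaler_eq0 mulf_eq0 invr_eq0 pnatr_eq0 (gt_eqF c_gt0) => /eqP.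
apply: extreme_Gamma_pi_perturb A_ext _ _ _.
- rewrite /centrosymmetric [RHS]linearZ; congr (_ *: _).
  by rewrite linearD /= mxpiK addrC.
- move=> i; under eq_bigr do rewrite !mxE.
  by rewrite -mulr_sumr big_split /= (sum_rev_ord (E (rev_ord i))) !E_sum addr0 mulr0.
- move=> i j; rewrite !mxE normrM ger0_norm //.
  rewrite (le_trans (ler_wpM2l half_c_ge0 (ler_normD _ _))) // mulrDr (splitr (A i j)).
  by rewrite lerD ?E_le // -(centrosymmetricE A_sym) E_le.
Qed.

Lemma sum_delta_mx_row (i0 i : 'I_m) (j0 : 'I_n) :
  \sum_j delta_mx i0 j0 i j = (i == i0)%:R :> R.
Proof.
under eq_bigr do rewrite mxE.
by rewrite (bigD1 j0) //= eqxx andbT big1 ?addr0 // => j /negbTE->; rewrite andbF.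
Qed.

Lemma extreme_Gamma_pi_row_support A i j1 j2 :
  extreme_point (@Gamma_pi R m n) A -> j1 != j2 -> 0 < A i j1 -> 0 < A i j2 ->
  i = rev_ord i /\ j2 = rev_ord j1.
Proof.
move=> A_ext j12 A1_gt0 A2_gt0.
pose E : 'M[R]_(m, n) := delta_mx i j1 - delta_mx i j2.
have E_sum k : \sum_l E k l = 0.
  by under eq_bigr do rewrite mxE [X in _ + X]mxE; rewrite sumrB !sum_delta_mx_row subrr.
have E_entry k l : E k l = ((k == i) && (l == j1))%:R - ((k == i) && (l == j2))%:R.
  by rewrite !mxE.
have E_le1 k l : `|E k l| <= 1.
  rewrite E_entry; case: (k == i) => //=; last by rewrite subrr normr0.
  have [-> | _] := eqVneq l j1; first by rewrite (negbTE j12) subr0 normr1.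
  by case: (l == j2); rewrite ?sub0r ?normrN ?normr1 ?normr0.
have E_supp k l : E k l != 0 -> Num.min (A i j1) (A i j2) <= A k l.
  rewrite E_entry; have [-> | _] := eqVneq k i; last by rewrite subrr eqxx.
  have [-> | _] := eqVneq l j1; first by rewrite ge_min lexx.
  by have [-> | _] := eqVneq l j2; rewrite ?ge_min ?lexx ?orbT ?subrr ?eqxx.
have c_gt0 : 0 < Num.min (A i j1) (A i j2) by rewrite lt_min A1_gt0 A2_gt0.
have /matrixP /(_ i j1) :=
  extreme_Gamma_pi_symmetrized_eq0 A_ext c_gt0 E_sum E_le1 E_supp.
rewrite !mxE eqxx (negbTE j12) /= subr0 eqxx.
have [i_fix | _] /= := eqVneq (rev_ord i) i; last first.
  by rewrite subrr addr0 => /eqP; rewrite oner_eq0.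
have [<- | _] /= := eqVneq (rev_ord j1) j2; first by rewrite i_fix.
by case: (rev_ord j1 == j1); rewrite /= ?mulr1n ?mulr0n => ?; exfalso; lra.
Qed.

Lemma extreme_Gamma_pi_row_eq0 A i j k :
  extreme_point (@Gamma_pi R m n) A -> 0 < A i j -> j != k ->
  ~~ ((i == rev_ord i) && (k == rev_ord j)) -> A i k = 0.
Proof.
move=> A_ext Aj_gt0 jk; apply: contraNeq => Ak_neq0.
have Ak_gt0 : 0 < A i k by rewrite lt0r Ak_neq0 (A_ext.1.2.1 i k).
by have [/eqP-> /eqP->] := extreme_Gamma_pi_row_support A_ext jk Aj_gt0 Ak_gt0.
Qed.

Lemma extreme_Gamma_pi_offcentre_row A i :
  extreme_point (@Gamma_pi R m n) A -> i != rev_ord i ->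
  exists j, forall k, A i k = (k == j)%:R.
Proof.
move=> A_ext i_nfix; have [[_ [A_ge0 A_sum]] _] := A_ext.
have [j Aj_gt0] := sumr_eq1_exists_gt0 (A_ge0 i) (A_sum i).
exists j; apply: sumr_eq1_supp1 (A_sum i) _ => k kj.
apply: extreme_Gamma_pi_row_eq0 A_ext Aj_gt0 _ _; first by rewrite eq_sym.
by rewrite (negbTE i_nfix).
Qed.

Lemma extreme_Gamma_pi_central_row A i :
  extreme_point (@Gamma_pi R m n) A -> i = rev_ord i ->
  exists j, forall k, A i k = ((k == j)%:R + (k == rev_ord j)%:R) / 2.
Proof.
move=> A_ext i_fix; have [[A_sym [A_ge0 A_sum]] _] := A_ext.
have [j Aj_gt0] := sumr_eq1_exists_gt0 (A_ge0 i) (A_sum i).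
exists j; apply: sumr_eq1_supp_rev (A_sum i) _ => [k | k kj kjr].
  by rewrite {1}i_fix centrosymmetricE.
apply: extreme_Gamma_pi_row_eq0 A_ext Aj_gt0 _ _; first by rewrite eq_sym.
by rewrite (negbTE kjr) andbF.
Qed.

Lemma extreme_Gamma_pi_decomp A :
  extreme_point (@Gamma_pi R m n) A ->
  exists g : 'I_m -> 'I_n,
    forall i k, A i k = ((k == g i)%:R + (k == rev_ord (g (rev_ord i)))%:R) / 2.
Proof.
move=> A_ext; have A_sym := centrosymmetricE A_ext.1.1.
have /fin_all_exists [f A_f] i : exists j, forall k, A i k =
    if i == rev_ord i then ((k == j)%:R + (k == rev_ord j)%:R) / 2 else (k == j)%:R.
  have [i_fix | i_nfix] := eqVneq i (rev_ord i).
    exact: extreme_Gamma_pi_central_row.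
  exact: extreme_Gamma_pi_offcentre_row.
exists (fun i : 'I_m => if (i <= rev_ord i)%N then f i else rev_ord (f (rev_ord i))).
move=> i k.
rewrite rev_ordK.
have [i_lt | i_gt | /val_inj i_fix] := ltngtP i (rev_ord i).
- have i_nfix : (i == rev_ord i) = false.
    by apply/eqP => i_fix; move: i_lt; rewrite -i_fix ltnn.
  by rewrite rev_ordK A_f i_nfix [RHS]mulrDl -splitr.
- have i_nfix : (rev_ord i == i) = false.
    by apply/eqP => i_fix; move: i_gt; rewrite i_fix ltnn.
  rewrite -A_sym (A_f (rev_ord i)) rev_ordK i_nfix (can2_eq rev_ordK rev_ordK).
  by rewrite [RHS]mulrDl -splitr.
- by rewrite (A_f i) -i_fix eqxx.
Qed.

End CentrosymmetricStochastic.

Section GraphMatrix.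
Variables (R : realType) (m n : nat).

Definition graph_mx (g : 'I_m -> 'I_n) : 'M[R]_(m, n) := \matrix_(i, k) (k == g i)%:R.

Lemma graph_mx_rect_perm g : rect_perm_mx (graph_mx g).
Proof.
split=> [i k | i]; first by rewrite mxE; case: eqP; [right | left].
exists (g i); split=> [|k]; first by rewrite mxE eqxx.
by rewrite mxE; case: eqP => // _ /eqP; rewrite eq_sym oner_eq0.
Qed.

Lemma mxpi_graph_mx g :
  mxpi (graph_mx g) = graph_mx (fun i => rev_ord (g (rev_ord i))).
Proof. by apply/matrixP => i k; rewrite !mxE (can2_eq rev_ordK rev_ordK). Qed.

End GraphMatrix.

Arguments graph_mx {R m n} g.

Theorem mainTheorem1 (R : realType) (m n : nat) (hm : (0 < m)%N) (hn : (0 < n)%N)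
  (A : 'M[R]_(m, n)) :
  extreme_point (@Gamma_pi R m n) A ->
  exists P : 'M[R]_(m, n), rect_perm_mx P /\ A = 2^-1 *: (P + mxpi P).
Proof.
move=> A_ext; have [g A_g] := extreme_Gamma_pi_decomp A_ext.
exists (graph_mx g); split; first exact: graph_mx_rect_perm.
by apply/matrixP => i k; rewrite mxpi_graph_mx !mxE A_g mulrC.
Qed.
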